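(* Let $M'=M[D,K]$ be a compatible minor of the weighted uncertainty matroid $\mathcal{M}$. Let $e$ be a non-trivial element of $M'$ such that (i) there exists a circuit $C$ of $M'$ with $e\in C$, (ii) $w_e=L_e$, (iii) $e$ has maximum weight in $C$, and (iv) $e$ has maximum query cost in $C\cap E^L_{w_e}$. Then $M[D\cup\{e\},K]$ is a compatible minor of $\mathcal{M}$.
   Context: A weighted uncertainty matroid $\mathcal{M}=(E,\mathcal{I},A,w)$ consists of a matroid $M=(E,\mathcal{I})$ on a finite set $E$, for each $e\in E$ a non-empty finite union $A_e$ of bounded real intervals (each open or closed), a weight $w_e\in A_e$, and a query cost $c_e\ge0$. $L_e=\inf A_e$, $U_e=\sup A_e$; $e$ is trivial if $A_e=\{w_e\}$. For a real $x$, $E^L_x=\{e\in E: L_e=x \text{ and } e \text{ non-trivial}\}$. A minimum-weight basis (MWB) is a basis minimizing total weight. A weight assignment is $w^*$ with $w^*_e\in A_e$, consistent with $Q$ if $w^*_e=w_e$ on $Q$. $Q$ verifies an MWB $B$ if for every weight assignment consistent with $Q$, $B$ is an MWB with respect to it; a certificate for $\mathcal{M}$ is a set verifying some MWB, and $c^*$ denotes the minimum cost $\sum_{e\in Q}c_e$ of a certificate for $\mathcal{M}$. For $D,K\subseteq E$, $M[D,K]$ is the matroid obtained from $M$ by deleting $D$ and contracting $K$, ground set $E\setminus(D\cup K)$, weights restricted. $M[D,K]$ is a compatible minor if there is a set $Q$ of cost $c^*$ verifying an MWB $B$ of $\mathcal{M}$ with $K\subseteq B$, $D\cap B=\emptyset$.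 *)

From HB Require Import structures.
From mathcomp Require Import all_boot all_order all_algebra.
From mathcomp Require Import reals.
Set Implicit Arguments. Unset Strict Implicit. Unset Printing Implicit Defensive.
Import Order.TTheory GRing.Theory Num.Theory.
Local Open Scope ring_scope.

Section Defs.
Variables (E : finType) (R : realType).

(* An uncertainty area: finite union of bounded intervals; each interval is
   (l, u, closed) meaning [l,u] if closed = true and (l,u) otherwise. *)
Definition itv_mem (x : R) (i : R * R * bool) : bool :=
  let: (l, u, cl) := i in if cl then (l <= x <= u) else (l < x < u).
Definition in_A (a : seq (R * R * bool)) (x : R) : bool := has (itv_mem x) a.

Record wum := WUM {
  indep : {set E} -> bool;
  A : E -> seq (R * R * bool);
  w : E -> R;
  c : E -> R;
  indep0 : indep set0;
  indep_sub : forall X Y : {set E}, Y \subset X -> indep X -> indep Y;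
  indep_exch : forall X Y : {set E}, indep X -> indep Y -> (#|X| < #|Y|)%N ->
      exists2 y, y \in Y :\: X & indep (y |: X);
  w_in : forall e, in_A (A e) (w e);
  c_ge0 : forall e, 0 <= c e
}.

Variable M : wum.

Definition Lb (e : E) : R := reals.inf (fun x : R => in_A (A M e) x : Prop).
Definition trivial (e : E) : Prop := forall x, in_A (A M e) x <-> x = w M e.
Definition EL (x : R) (e : E) : Prop := Lb e = x /\ ~ trivial e.

Definition is_basis (B : {set E}) : Prop :=
  indep M B /\ forall X : {set E}, indep M X -> B \subset X -> X = B.
Definition wsum (w' : E -> R) (X : {set E}) : R := \sum_(e in X) w' e.
Definition is_MWB (w' : E -> R) (B : {set E}) : Prop :=
  is_basis B /\ forall B' : {set E}, is_basis B' -> wsum w' B <= wsum w' B'.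
Definition assignment (w' : E -> R) : Prop := forall e, in_A (A M e) (w' e).
Definition consistent (Q : {set E}) (w' : E -> R) : Prop :=
  forall e, e \in Q -> w' e = w M e.
Definition verifies (Q B : {set E}) : Prop :=
  forall w', assignment w' -> consistent Q w' -> is_MWB w' B.
Definition certificate (Q : {set E}) : Prop := exists B, verifies Q B.
Definition cost (Q : {set E}) : R := \sum_(e in Q) c M e.

Definition minor_indep (D K X : {set E}) : Prop :=
  X \subset ~: (D :|: K) /\
  exists J : {set E}, [/\ J \subset K, indep M J,
     (forall J' : {set E}, J' \subset K -> indep M J' -> J \subset J' -> J' = J) &
     indep M (X :|: J)].
Definition minor_circuit (D K C : {set E}) : Prop :=
  [/\ C \subset ~: (D :|: K), ~ minor_indep D K C &
      forall C' : {set E}, C' \proper C -> minor_indep D K C'].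

Definition compatible_minor (D K : {set E}) : Prop :=
  exists Q B, [/\ verifies Q B,
    (forall Q' : {set E}, certificate Q' -> cost Q <= cost Q'),
    K \subset B & [disjoint D & B]].
End Defs.

(** Take a minimum-cost certificate [Q] verifying an MWB [B] with [K] inside [B]
    and [B] disjoint from [D].  If [e] is not in [B] the same pair works.
    Otherwise [C] yields [f] in [C \ B] with [B' = B - e + f] a basis, and since
    [B] is an MWB and [e] is heaviest in [C], [w_f = w_e = L_e].  If [f] is
    trivial, [Q] verifies [B']: no assignment consistent with [Q] makes [e]
    lighter than [f].  Otherwise [Q - e + f] verifies [B']: resetting [e] to
    [L_e] in an assignment consistent with it gives one consistent with [Q],
    under which [B'] weighs as much as the MWB [B]; raising [e] back only helps
    [B'], which avoids [e].  The cost does not grow: if [f] is not in [Q], then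
    [e] is in [Q] (else raising [w_e] would make [B'] lighter than [B]) and
    [L_f = w_e] (else lowering [w_f] would), so [f] is in [E^L_{w_e}] and
    [c_f <= c_e]. *)

From HB Require Import structures.
From mathcomp Require Import all_boot all_order all_algebra.
From mathcomp Require Import reals lra.
From Stdlib Require Import Classical.
Import Order.TTheory GRing.Theory Num.Theory.
Local Open Scope ring_scope.
Set Implicit Arguments. Unset Strict Implicit.

Section UncertaintyMatroid.
Variables (R : realType) (E : finType) (M : wum E R).

Lemma in_A_lbounded (a : seq (R * R * bool)) :
  exists lb, forall x, in_A a x -> lb <= x.
Proof.
elim: a => [|[[l u] cl] a [lb lbP]]; first by exists 0.
exists (Num.min l lb) => x; rewrite /in_A /= => /orP[|/lbP]; last first.
  by move=> lb_x; rewrite ge_min lb_x orbT.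
by case: cl => /andP[l_x _]; rewrite ge_min ?l_x // ltW.
Qed.

Lemma Lb_le g x : in_A (A M g) x -> Lb M g <= x.
Proof.
move=> Ax; have [lb lbP] := in_A_lbounded (A M g).
by apply: (@ge_inf R (fun y : R => in_A (A M g) y : Prop)) => //; exists lb.
Qed.

Lemma Lb_min g y :
  in_A (A M g) y -> (forall x, in_A (A M g) x -> y <= x) -> Lb M g = y.
Proof.
move=> Ay y_min; apply/le_anti; rewrite Lb_le //=.
by apply: lb_le_inf => [|x /y_min//]; exists y.
Qed.

Lemma assignment_eta w' g x :
  assignment M w' -> in_A (A M g) x -> assignment M [eta w' with g |-> x].
Proof. by move=> w'A Ax h /=; case: eqP => [->|_]. Qed.

Lemma consistent_eta (Q : {set E}) w' g x :
  consistent M (Q :\ g) w' -> (g \in Q -> x = w M g) ->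
  consistent M Q [eta w' with g |-> x].
Proof.
move=> w'Q gQ h /=; case: eqP => [-> /gQ //|/eqP hg hQ].
by apply: w'Q; rewrite !inE hg.
Qed.

Lemma cost_subset (X Y : {set E}) : X \subset Y -> cost M X <= cost M Y.
Proof.
move=> XY; rewrite /cost [leRHS](big_setID X) /= (setIidPr XY) lerDl.
by apply: sumr_ge0 => g _; apply: c_ge0.
Qed.

Lemma cost_exchange_le (Q : {set E}) e f :
  (f \notin Q -> e \in Q /\ c M f <= c M e) -> cost M (f |: (Q :\ e)) <= cost M Q.
Proof.
have [fQ _|fNQ /(_ isT)[eQ cfe]] := boolP (f \in Q).
  by apply: cost_subset; rewrite subUset sub1set fQ subD1set.
rewrite /cost big_setU1 ?inE ?negb_and ?fNQ ?orbT //= [leRHS](big_setD1 e eQ) /=.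
by rewrite lerD2r.
Qed.

Lemma basis_of_card (B X : {set E}) :
  is_basis M B -> indep M X -> (#|B| <= #|X|)%N -> is_basis M X.
Proof.
move=> [Bi Bmax] Xi BX; split=> // Y Yi XY; apply/eqP; rewrite eqEsubset XY andbT.
apply/negP => /negP YNX; have XY' : X \proper Y by rewrite properE XY.
have [y /setDP[yY yNB] yBi] := indep_exch Bi Yi (leq_ltn_trans BX (proper_card XY')).
by move: yNB; rewrite -(Bmax _ yBi (subsetUr _ _)) setU11.
Qed.

Lemma indep_augment (B S : {set E}) : is_basis M B -> indep M S ->
  exists Z, [/\ indep M Z, S \subset Z, Z \subset S :|: B & (#|B| <= #|Z|)%N].
Proof.
move=> Bb Si; pose P Z := [&& indep M Z, S \subset Z & Z \subset S :|: B].
have PS : P S by rewrite /P Si subxx subsetUl.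
have [Z /and3P[Zi SZ ZSB] Zmax] := @arg_maxnP _ S P (fun Z => #|Z|) PS.
exists Z; split=> //; rewrite leqNgt; apply/negP => ZB.
have [y /setDP[yB yNZ] yZi] := indep_exch Zi Bb.1 ZB.
have /Zmax : P (y |: Z).
  by rewrite /P yZi (subset_trans SZ (subsetUr _ _)) subUset sub1set !inE yB orbT.
by rewrite cardsU1 yNZ => /=; rewrite ltnn.
Qed.

Lemma basis_exchange (B Z : {set E}) e :
  is_basis M B -> e \in B -> indep M Z -> e \notin Z -> (#|B| <= #|Z|)%N ->
  exists2 f, f \in Z :\: B & is_basis M (f |: (B :\ e)).
Proof.
move=> Bb eB Zi eNZ BZ.
have cardBe : #|B| = #|B :\ e|.+1 by rewrite (cardsD1 e B) eB.
have [|f /setDP[fZ fNBe] fBi] := indep_exch (indep_sub (subD1set B e) Bb.1) Zi.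
  by rewrite -ltnS -cardBe.
have fe : f != e by apply: contraNneq eNZ => <-.
exists f; first by rewrite inE fZ andbT; move: fNBe; rewrite !inE fe.
by apply: basis_of_card Bb fBi _; rewrite cardsU1 fNBe cardBe.
Qed.

Lemma circuit_exchange (B S C : {set E}) e :
  is_basis M B -> e \in B -> S \subset B ->
  indep M ((C :\ e) :|: S) -> ~ indep M (C :|: S) ->
  exists2 f, f \in C :\: B & is_basis M (f |: (B :\ e)).
Proof.
move=> Bb eB SB CeSi CSd; have [Z [Zi CeSZ ZCeSB BZ]] := indep_augment Bb CeSi.
have eNZ : e \notin Z.
  apply: contra_notN CSd => eZ; apply: indep_sub Zi; apply/subsetP => x.
  have [->//|xe] := eqVneq x e; rewrite inE => CSx.
  by apply: (subsetP CeSZ); rewrite !inE xe.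
have [f /setDP[fZ fNB] fb] := basis_exchange Bb eB Zi eNZ BZ.
exists f => //; rewrite inE fNB /=.
have := subsetP ZCeSB f fZ; rewrite !inE (negbTE fNB) orbF.
by case/orP=> [/andP[]//|/(subsetP SB) fB]; rewrite fB in fNB.
Qed.

Lemma minor_indepE (D K X : {set E}) : indep M K ->
  minor_indep M D K X <-> X \subset ~: (D :|: K) /\ indep M (X :|: K).
Proof.
move=> Ki; split=> [[XDK [J [JK _ Jmax XJi]]]|[XDK XKi]].
  by split=> //; rewrite (Jmax K (subxx K) Ki JK).
split=> //; exists K; split=> // J' J'K _ KJ'.
by apply/eqP; rewrite eqEsubset J'K.
Qed.

Lemma minor_circuit_contract (D K C : {set E}) e :
  indep M K -> minor_circuit M D K C -> e \in C ->
  indep M ((C :\ e) :|: K) /\ ~ indep M (C :|: K).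
Proof.
move=> Ki [CDK Cd Cmin] eC; split.
  by have /(minor_indepE D _ Ki)[] := Cmin _ (properD1 eC).
by move=> CKi; apply: Cd; apply/(minor_indepE D C Ki).
Qed.

Lemma disjoint_exchange (A B : {set E}) e f :
  [disjoint A & B] -> f \notin e |: A -> [disjoint e |: A & f |: (B :\ e)].
Proof.
move=> AB fNeA; rewrite disjoint_sym disjoints_subset subUset sub1set inE fNeA /=.
apply/subsetP => x; rewrite !inE => /andP[xe xB]; rewrite (negbTE xe) /=.
by apply: contraTN xB => xA; rewrite (disjointFr AB xA).
Qed.

Lemma wsum_exchange (w' : E -> R) (B : {set E}) e f : e \in B -> f \notin B ->
  wsum w' (f |: (B :\ e)) + w' e = wsum w' B + w' f.
Proof.
move=> eB fNB; rewrite /wsum big_setU1 ?inE ?negb_and ?fNB ?orbT //=.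
by rewrite (big_setD1 e eB) /=; lra.
Qed.

Lemma is_MWB_le (w1 w2 : E -> R) (B : {set E}) :
  (forall g, w1 g <= w2 g) -> {in B, w2 =1 w1} -> is_MWB M w1 B -> is_MWB M w2 B.
Proof.
move=> w12 w21 [Bb Bmin]; split=> // B' /Bmin w1B.
have -> : wsum w2 B = wsum w1 B by apply: eq_bigr.
by apply: le_trans w1B _; apply: ler_sum => g _; apply: w12.
Qed.

Lemma verifies_MWB (Q B : {set E}) : verifies M Q B -> is_MWB M (w M) B.
Proof. by move=> QB; apply: QB => [|g]; [apply: w_in|]. Qed.

Section BasisExchange.
Variables (B : {set E}) (e f : E).
Hypotheses (eB : e \in B) (fNB : f \notin B) (B'b : is_basis M (f |: (B :\ e))).

Lemma exchange_neq : f != e.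
Proof. by apply: contraNneq fNB => ->. Qed.

Lemma is_MWB_exchange_le w' : is_MWB M w' B -> w' e <= w' f.
Proof. by move=> [_ /(_ _ B'b)]; have := wsum_exchange w' eB fNB; lra. Qed.

Lemma is_MWB_exchange w' :
  is_MWB M w' B -> w' f <= w' e -> is_MWB M w' (f |: (B :\ e)).
Proof.
move=> [_ Bmin] wfe; split=> // B'' /Bmin.
by have := wsum_exchange w' eB fNB; lra.
Qed.

Variable Q : {set E}.
Hypothesis QB : verifies M Q B.

Lemma unqueried_exchange_le g x : g \notin Q -> in_A (A M g) x ->
  [eta w M with g |-> x] e <= [eta w M with g |-> x] f.
Proof.
move=> gNQ Ax; apply: is_MWB_exchange_le; apply: QB.
  exact: assignment_eta (@w_in _ _ M) Ax.
by apply: consistent_eta => // gQ; rewrite gQ in gNQ.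
Qed.

Lemma exchange_queried :
  w M e = Lb M e -> w M f = w M e -> ~ trivial M e -> e \in Q.
Proof.
move=> we wf; have [//|eNQ] := boolP (e \in Q); case=> x.
split=> [Ax|->]; last exact: w_in.
have := unqueried_exchange_le eNQ Ax; rewrite /= eqxx (negbTE exchange_neq) wf.
by move=> xe; apply/le_anti; rewrite xe we Lb_le.
Qed.

Lemma exchange_EL :
  w M f = w M e -> f \notin Q -> ~ trivial M f -> EL M (w M e) f.
Proof.
move=> wf fNQ f_nt; split=> //; rewrite -wf; apply: Lb_min => [|x Ax].
  exact: w_in.
have := unqueried_exchange_le fNQ Ax.
by rewrite /= eqxx eq_sym (negbTE exchange_neq) wf.
Qed.

Lemma verifies_exchange : w M e = Lb M e -> w M f = w M e -> trivial M f ->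
  verifies M Q (f |: (B :\ e)).
Proof.
move=> we wf f_triv w' w'A w'Q; apply: (is_MWB_exchange (QB w'A w'Q)).
by rewrite ((f_triv _).1 (w'A f)) wf we Lb_le.
Qed.

Lemma verifies_exchange_query : w M e = Lb M e -> w M f = w M e ->
  verifies M (f |: (Q :\ e)) (f |: (B :\ e)).
Proof.
move=> we wf w' w'A w'Q; pose w'' := [eta w' with e |-> w M e].
have w''Q : consistent M Q w''.
  by apply: consistent_eta => // g gQ; apply: w'Q; rewrite inE gQ orbT.
have w''A : assignment M w'' := assignment_eta w'A (w_in M e).
apply: (@is_MWB_le w'' _ _ _ _ (is_MWB_exchange (QB w''A w''Q) _)).
- by move=> g /=; case: eqP => [->|//]; rewrite we Lb_le.
- move=> g; have [->|ge] := eqVneq g e; last by rewrite /= (negbTE ge).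
  by rewrite !inE eqxx /= orbF eq_sym (negbTE exchange_neq).
- by rewrite /= eqxx (negbTE exchange_neq) (w'Q f) ?setU11 ?wf.
Qed.

End BasisExchange.
End UncertaintyMatroid.

Theorem lemma18 (R : realType) (E : finType) (M : wum E R)
    (D K C : {set E}) (e : E) :
  compatible_minor M D K ->
  e \in ~: (D :|: K) -> ~ trivial M e ->
  minor_circuit M D K C -> e \in C ->
  w M e = Lb M e ->
  (forall f, f \in C -> w M f <= w M e) ->
  (forall f, f \in C -> EL M (w M e) f -> c M f <= c M e) ->
  compatible_minor M (e |: D) K.
Proof.
move=> [Q [B [QB Qmin KB DB]]] eDK e_nt Ccirc eC we wC cC.
have Bb := (verifies_MWB QB).1.
have [eB|eNB] := boolP (e \in B); last first.
  exists Q, B; split=> //.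
  by rewrite disjoints_subset subUset sub1set inE eNB -disjoints_subset.
have eNK : e \notin K by move: eDK; rewrite !inE negb_or => /andP[].
have [CeK CK] := minor_circuit_contract (indep_sub KB Bb.1) Ccirc eC.
have [f /setDP[fC fNB] B'b] := circuit_exchange Bb eB KB CeK CK.
have fNeD : f \notin e |: D.
  case: Ccirc => /subsetP/(_ f fC); rewrite !inE !negb_or (exchange_neq eB fNB).
  by case/andP.
have wf : w M f = w M e.
  by apply/le_anti; rewrite wC //= (is_MWB_exchange_le eB fNB B'b (verifies_MWB QB)).
have KB' : K \subset f |: (B :\ e).
  by apply: subset_trans (subsetU1 f _); rewrite subsetD1 KB eNK.
have DB' := disjoint_exchange DB fNeD.
have [f_triv|f_nt] := classic (trivial M f).
  by exists Q, (f |: (B :\ e)); split=> //; apply: verifies_exchange.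
exists (f |: (Q :\ e)), (f |: (B :\ e)); split=> //.
  exact: (verifies_exchange_query eB fNB B'b QB we wf).
move=> Q' /Qmin; apply: le_trans; apply: cost_exchange_le => fNQ.
split; first exact: (exchange_queried eB fNB B'b QB we wf e_nt).
exact: (cC f fC (exchange_EL eB fNB B'b QB wf fNQ f_nt)).
Qed.
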